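(* Let $d\ge 4$ be an integer such that there exists a Hadamard matrix of order $d$ (a $d\times d$ matrix $H_d$ with entries $\pm1$ satisfying $H_d^TH_d=d\,I_d$). Then there is an explicit construction of a $\big\lfloor\frac12\sqrt{d}\big\rfloor$-neighborly centrally symmetric $d$-dimensional polytope with $4d$ vertices.
   Context: A polytope $P\subset\mathbb{R}^d$ is centrally symmetric (cs) if $P=-P$. A cs polytope $P$ is $k$-neighborly if every set of $k$ of its vertices, no two of which are antipodes (i.e. no two of the form $v,-v$), is the vertex set of a face of $P$. *)

From HB Require Import structures.
From mathcomp Require Import all_boot all_order all_algebra.
From mathcomp Require Import reals.
Set Implicit Arguments. Unset Strict Implicit. Unset Printing Implicit Defensive.
Import Order.TTheory GRing.Theory Num.Theory.
Local Open Scope ring_scope.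

Section Polytopes.
Variables (R : realType) (d : nat).
Local Notation pt := 'rV[R]_d.

Definition dotv (a x : pt) : R := \sum_(i < d) a 0 i * x 0 i.

Definition conv (V : seq pt) : pt -> Prop := fun x =>
  exists w : 'I_(size V) -> R,
    [/\ forall i, 0 <= w i, \sum_i w i = 1 & x = \sum_i w i *: V`_i].

(* F is a face of the convex set A: intersection of A with a supporting
   hyperplane {a.x = b} where a.x <= b on A (a = 0, b = 0 gives A itself;
   the empty face is also allowed). *)
Definition is_face (A F : pt -> Prop) : Prop :=
  exists (a : pt) (b : R), (forall x, A x -> dotv a x <= b) /\
    (forall x, F x <-> (A x /\ dotv a x = b)).

Definition is_vertex (A : pt -> Prop) (v : pt) : Prop :=
  is_face A (fun x => x = v).

Definition centrally_symmetric (P : pt -> Prop) : Prop :=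
  forall x, P x <-> P (- x).

Definition full_dimensional (P : pt -> Prop) : Prop :=
  forall (a : pt) (b : R), (forall x, P x -> dotv a x = b) -> a = 0.

Definition has_n_vertices (P : pt -> Prop) (n : nat) : Prop :=
  exists W : seq pt, [/\ uniq W, size W = n & forall v, is_vertex P v <-> v \in W].

Definition cs_neighborly (P : pt -> Prop) (k : nat) : Prop :=
  forall S : seq pt, uniq S -> size S = k ->
    (forall v, v \in S -> is_vertex P v) ->
    (forall v, v \in S -> - v \notin S) ->
    exists F, is_face P F /\ (forall v, is_vertex F v <-> v \in S).

End Polytopes.

Definition is_hadamard (d : nat) (H : 'M[int]_d) : Prop :=
  (forall i j, H i j = 1 \/ H i j = -1) /\ H^T *m H = (d%:Z)%:M.

(* The d unit vectors e_i and the d normalised columns h_j / sqrt d of H are two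
   orthonormal bases with |<e_i, h_j / sqrt d>| = 1 / sqrt d.  With their negatives they
   give 4d unit vectors whose inner products are, up to sign, at most mu = 1 / sqrt d.
   For a set S of k of them with no antipodal pair and (2k - 1) mu < 1, the Gram matrix is
   diagonally dominant, so some a in the span of S has <a, s> = 1 for all s in S, with
   coefficients at most 1 / (1 - (k - 1) mu); hence |<a, w>| <= k mu / (1 - (k - 1) mu) < 1
   for every w outside +-S, while <a, -s> = -1, so the hyperplane <a, x> = 1 exposes
   exactly the chosen k vertices.  For k = floor (sqrt d / 2) one has 2k - 1 < sqrt d. *)

From HB Require Import structures.
From mathcomp Require Import all_boot all_order all_algebra.
From mathcomp Require Import reals.
From mathcomp Require Import ring lra zify.
Import Order.TTheory GRing.Theory Num.Theory.
Local Open Scope ring_scope.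
Set Implicit Arguments. Unset Strict Implicit. Unset Printing Implicit Defensive.

Section Hull.
Variables (R : realType) (d : nat).
Local Notation pt := 'rV[R]_d.
Implicit Types (a x v : pt) (V : seq pt).

Lemma dotvC a x : dotv a x = dotv x a.
Proof. by apply: eq_bigr => i _; rewrite mulrC. Qed.

Lemma dotvNl a x : dotv (- a) x = - dotv a x.
Proof. by rewrite /dotv -sumrN; apply: eq_bigr => i _; rewrite mxE mulNr. Qed.

Lemma dotvNr a x : dotv a (- x) = - dotv a x.
Proof. by rewrite dotvC dotvNl dotvC. Qed.

Lemma dotv_sumr (I : finType) (w : I -> R) (X : I -> pt) a :
  dotv a (\sum_i w i *: X i) = \sum_i w i * dotv a (X i).
Proof.
rewrite /dotv; under eq_bigr => j _ do rewrite summxE mulr_sumr.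
rewrite exchange_big; apply: eq_bigr => i _; rewrite mulr_sumr.
by apply: eq_bigr => j _; rewrite mxE mulrCA.
Qed.

Lemma dotv_delta x i : dotv (delta_mx 0 i) x = x 0 i.
Proof.
rewrite /dotv (bigD1 i) //= big1 ?addr0 => [|j ji]; first by rewrite mxE !eqxx mul1r.
by rewrite mxE eqxx (negbTE ji) mul0r.
Qed.

Lemma dotv_delta_delta (i j : 'I_d) : dotv (delta_mx 0 i : pt) (delta_mx 0 j) = (i == j)%:R.
Proof. by rewrite dotv_delta mxE eqxx. Qed.

Lemma dotv_orthonormal_inj (I : eqType) (f : I -> pt) :
  (forall i j, dotv (f i) (f j) = (i == j)%:R) -> injective f.
Proof.
move=> f_on i j fij; apply/eqP; have := f_on i j.
by rewrite fij f_on eqxx; case: (i == j) => // /eqP; rewrite oner_eq0.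
Qed.

Section ConvexCombination.
Variables (n : nat) (w : 'I_n -> R) (X : 'I_n -> pt).
Hypotheses (w_ge0 : forall i, 0 <= w i) (w_sum1 : \sum_i w i = 1).

Lemma exists_weight_gt0 : exists i, 0 < w i.
Proof.
apply/existsP; apply: contraT => /existsPn w_le0.
have : \sum_i w i == 0.
  by rewrite psumr_eq0 //; apply/allP => i _; rewrite eq_le w_ge0 andbT leNgt w_le0.
by rewrite w_sum1 oner_eq0.
Qed.

Lemma dotv_comb_le a b : (forall i, 0 < w i -> dotv a (X i) <= b) ->
  dotv a (\sum_i w i *: X i) <= b.
Proof.
move=> le_b; rewrite dotv_sumr -[b]mul1r -w_sum1 mulr_suml.
apply: ler_sum => i _; have [wi0|wi_gt0] := eqVneq (w i) 0; first by rewrite wi0 !mul0r.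
by apply: ler_wpM2l => //; apply: le_b; rewrite lt_def wi_gt0 w_ge0.
Qed.

Lemma dotv_comb_eq a b : (forall i, 0 < w i -> dotv a (X i) <= b) ->
  dotv a (\sum_i w i *: X i) = b -> forall i, 0 < w i -> dotv a (X i) = b.
Proof.
move=> le_b comb_b i wi_gt0.
have slack_ge0 j : 0 <= w j * (b - dotv a (X j)).
  have [wj0|wj_gt0] := eqVneq (w j) 0; first by rewrite wj0 mul0r.
  by rewrite mulr_ge0 // subr_ge0 le_b // lt_def wj_gt0 w_ge0.
have /psumr_eq0P slack0 : \sum_j w j * (b - dotv a (X j)) = 0.
  under eq_bigr => j _ do rewrite mulrBr.
  by rewrite sumrB -mulr_suml w_sum1 mul1r -dotv_sumr comb_b subrr.
have /eqP := slack0 (fun j _ => slack_ge0 j) i isT.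
by rewrite mulf_eq0 gt_eqF //= subr_eq0 => /eqP.
Qed.

Lemma comb_const v : (forall i, 0 < w i -> X i = v) -> \sum_i w i *: X i = v.
Proof.
move=> Xv; rewrite -[v]scale1r -w_sum1 scaler_suml; apply: eq_bigr => i _.
have [->|wi_gt0] := eqVneq (w i) 0; first by rewrite !scale0r.
by rewrite Xv // lt_def wi_gt0 w_ge0.
Qed.

End ConvexCombination.

Lemma conv_nth V (i : 'I_(size V)) : conv V V`_i.
Proof.
exists (fun j => (j == i)%:R); split=> [j||]; first by rewrite ler0n.
  by rewrite (bigD1 i) //= eqxx big1 ?addr0 // => j /negbTE ->.
by rewrite (bigD1 i) //= eqxx scale1r big1 ?addr0 // => j /negbTE ->; rewrite scale0r.
Qed.

Lemma conv_mem V v : v \in V -> conv V v.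
Proof.
by move=> vV; have := conv_nth (Ordinal (etrans (index_mem v V) vV)); rewrite /= nth_index.
Qed.

Lemma conv_dotv_le V a b : (forall i : 'I_(size V), dotv a V`_i <= b) ->
  forall x, conv V x -> dotv a x <= b.
Proof. by move=> le_b x [w [w_ge0 w_sum1 ->]]; apply: dotv_comb_le. Qed.

Lemma conv_opp V V' : {subset map -%R V <= V'} -> forall x, conv V x -> conv V' (- x).
Proof.
move=> VNV' x [w [w_ge0 w_sum1 ->]].
have VNV'_nth (i : 'I_(size V)) : - V`_i \in V' by rewrite VNV' // map_f // mem_nth.
pose p (i : 'I_(size V)) : 'I_(size V') :=
  Ordinal (etrans (index_mem _ _) (VNV'_nth i)).
exists (fun j => \sum_(i | p i == j) w i); split=> [j||].
- exact: sumr_ge0.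
- by rewrite -w_sum1 (partition_big p predT).
rewrite -sumrN (partition_big p predT) //; apply: eq_bigr => j _.
rewrite scaler_suml; apply: eq_bigr => i /eqP <-.
by rewrite nth_index // scalerN.
Qed.

Lemma conv_cs V : {subset map -%R V <= V} -> centrally_symmetric (conv V).
Proof.
move=> VN x; split=> [|/(conv_opp VN)]; first exact: conv_opp.
by rewrite opprK.
Qed.

Lemma conv_full_dimensional V :
  {subset map -%R V <= V} -> (forall i, delta_mx 0 i \in V) -> full_dimensional (conv V).
Proof.
move=> VN delta_V a b a_b; apply/rowP => i; rewrite mxE.
have := a_b _ (conv_mem (delta_V i)).
have := a_b _ (conv_mem (VN _ (map_f _ (delta_V i)))).
rewrite dotvNr !(dotvC a) dotv_delta; lra.
Qed.

(* Satisfied both by conv V and by its faces, so that vertices of either are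
   characterised once. *)
Definition conv_supported V (F : pt -> Prop) := forall x, F x ->
  exists w : 'I_(size V) -> R, [/\ forall i, 0 <= w i, \sum_i w i = 1,
     x = \sum_i w i *: V`_i & forall i, 0 < w i -> F V`_i].

Lemma conv_supported_conv V : conv_supported V (conv V).
Proof. by move=> x [w [w_ge0 w_sum1 ->]]; exists w; split=> // i _; apply: conv_nth. Qed.

Lemma conv_supported_face V a b : (forall i : 'I_(size V), dotv a V`_i <= b) ->
  conv_supported V (fun x => conv V x /\ dotv a x = b).
Proof.
move=> le_b x [[w [w_ge0 w_sum1 xE]] ax_b]; exists w; split=> // i wi_gt0.
split; first exact: conv_nth.
by apply: (dotv_comb_eq (X := fun j => V`_j) w_ge0 w_sum1) => //; rewrite -xE.
Qed.

Section SupportedVertex.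
Variables (V : seq pt) (F : pt -> Prop).
Hypothesis F_supp : conv_supported V F.

Lemma supported_vertex_mem v : is_vertex F v -> v \in V /\ F v.
Proof.
move=> [a [b [le_b Fv_iff]]]; have [Fv av_b] := (Fv_iff v).1 erefl.
have [w [w_ge0 w_sum1 vE F_nth]] := F_supp Fv.
have [i wi_gt0] := exists_weight_gt0 w_ge0 w_sum1.
have aVi_b : dotv a V`_i = b.
  apply: (dotv_comb_eq (X := fun j => V`_j) w_ge0 w_sum1) (wi_gt0); last by rewrite -vE.
  by move=> j /F_nth; apply: le_b.
have <- : V`_i = v by apply/(Fv_iff _).2; split; [apply: F_nth | ].
by split; [apply: mem_nth | apply: F_nth].
Qed.

Lemma supported_is_vertex v a : F v ->
  (forall i : 'I_(size V), F V`_i -> V`_i != v -> dotv a V`_i < dotv a v) ->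
  is_vertex F v.
Proof.
move=> Fv lt_av; have le_av (i : 'I_(size V)) : F V`_i -> dotv a V`_i <= dotv a v.
  by move=> FVi; have [->|ne] := eqVneq V`_i v; last exact: ltW (lt_av i FVi ne).
exists a, (dotv a v); split=> [x /F_supp [w [w_ge0 w_sum1 -> F_nth]]|x].
  by apply: dotv_comb_le => // i /F_nth; apply: le_av.
split=> [->//|[/F_supp [w [w_ge0 w_sum1 xE F_nth]] ax]].
rewrite xE; apply: comb_const => // i wi_gt0; apply: contraTeq isT => ne.
have /(dotv_comb_eq w_ge0 w_sum1) : forall j, 0 < w j -> dotv a V`_j <= dotv a v.
  by move=> j /F_nth; apply: le_av.
rewrite -xE => /(_ ax i wi_gt0) aVi.
by have := lt_av i (F_nth i wi_gt0) ne; rewrite aVi ltxx.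
Qed.

End SupportedVertex.

End Hull.

Section DiagonallyDominant.
Variables (R : realFieldType) (n : nat) (G : 'M[R]_n) (mu : R).
Hypotheses (G_diag : forall m, G m m = 1)
  (G_offdiag : forall m j, m != j -> `|G m j| <= mu) (mu_small : n.-1%:R * mu < 1).

Lemma diag_dominant_row_bound (u : 'rV[R]_n) (r : R) :
  (forall j, `|(u *m G) 0 j| <= r) -> forall m, `|u 0 m| * (1 - n.-1%:R * mu) <= r.
Proof.
move=> uG_le m.
have [m0 _ u_max] := @arg_maxP _ _ _ m predT (fun j => `|u 0 j|) isT.
set M := `|u 0 m0|.
have offdiag_le : `|\sum_(j | j != m0) u 0 j * G j m0| <= n.-1%:R * (M * mu).
  apply: le_trans (ler_norm_sum _ _ _) _.
  have -> : n.-1%:R * (M * mu) = \sum_(j | j != m0) M * mu.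
    by rewrite sumr_const cardC1 card_ord mulr_natl.
  apply: ler_sum => j j_m0; rewrite normrM ler_pM //; first exact: u_max.
  exact: G_offdiag.
have M_le : M <= r + n.-1%:R * (M * mu).
  have := uG_le m0; rewrite mxE (bigD1 m0) //= G_diag mulr1 => uG_m0.
  by have := lerB_normD (u 0 m0) (\sum_(j | j != m0) u 0 j * G j m0); rewrite -/M; lra.
have D_ge0 : 0 <= 1 - n.-1%:R * mu by rewrite subr_ge0 ltW.
have := ler_wpM2r D_ge0 (u_max m isT); rewrite -/M; nra.
Qed.

Lemma diag_dominant_unitmx : G \in unitmx.
Proof.
rewrite -row_free_unit -kermx_eq0; apply/eqP/row_matrixP => i; rewrite row0.
apply/rowP => m; rewrite [RHS]mxE; apply/eqP; rewrite -normr_le0.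
have ker0 j : `|(row i (kermx G) *m G) 0 j| <= 0.
  by rewrite -row_mul mulmx_ker row0 mxE normr0.
by have := diag_dominant_row_bound ker0 m; rewrite pmulr_lle0 // subr_gt0.
Qed.

Lemma diag_dominant_solve_ones :
  exists c : 'rV[R]_n, c *m G = const_mx 1 /\ forall m, `|c 0 m| <= (1 - n.-1%:R * mu)^-1.
Proof.
exists (const_mx 1 *m invmx G); split=> [|m].
  by rewrite -mulmxA mulVmx ?diag_dominant_unitmx ?mulmx1.
rewrite -[_^-1]mul1r ler_pdivlMr ?subr_gt0 //; apply: diag_dominant_row_bound => j.
by rewrite -mulmxA mulVmx ?diag_dominant_unitmx ?mulmx1 // mxE normr1.
Qed.

End DiagonallyDominant.

Section CoherentUnitVectors.
Variables (R : realType) (d : nat) (V : seq 'rV[R]_d) (mu : R).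
Hypotheses (V_unit : forall u, u \in V -> dotv u u = 1)
  (V_coherent : forall u w, u \in V -> w \in V -> [\/ w = u, w = - u | `|dotv u w| <= mu])
  (mu_ge0 : 0 <= mu) (mu_lt1 : mu < 1).

Lemma dotv_lt1 u w : u \in V -> w \in V -> w != u -> dotv u w < 1.
Proof.
move=> uV wV; case: (V_coherent uV wV) => [->|->|mu_le _]; first by rewrite eqxx.
  by rewrite dotvNr V_unit //; lra.
exact: le_lt_trans (ler_norm _) (le_lt_trans mu_le mu_lt1).
Qed.

Lemma is_vertex_conv v : is_vertex (conv V) v <-> v \in V.
Proof.
split=> [/(supported_vertex_mem (@conv_supported_conv _ _ V)) [] //|vV].
apply: (supported_is_vertex (a := v) (@conv_supported_conv _ _ V)); first exact: conv_mem.
by move=> i _ ne; rewrite V_unit //; apply: dotv_lt1; rewrite ?mem_nth.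
Qed.

Section Gram.
Variable S : seq 'rV[R]_d.
Hypotheses (SV : {subset S <= V}) (S_uniq : uniq S)
  (S_noanti : forall v, v \in S -> - v \notin S).
Let k := size S.

Lemma gram_offdiag (m j : 'I_k) : m != j -> `|dotv S`_m S`_j| <= mu.
Proof.
have S_nth (i : 'I_k) : S`_i \in S := mem_nth 0 (ltn_ord i).
case: (V_coherent (SV (S_nth m)) (SV (S_nth j))) => // [Sj_m|Sj_Nm] m_j.
  by move: m_j; rewrite -(inj_eq val_inj) -(nth_uniq 0 _ _ S_uniq) ?ltn_ord // Sj_m eqxx.
by have := S_noanti (S_nth m); rewrite -Sj_Nm S_nth.
Qed.

Lemma exposing_functional : (k%:R + k.-1%:R) * mu < 1 ->
  exists a, (forall s, s \in S -> dotv a s = 1) /\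
            (forall w, w \in V -> w \notin S -> dotv a w < 1).
Proof.
move=> k_small; pose G : 'M[R]_k := \matrix_(m, j) dotv S`_m S`_j.
have G_diag m : G m m = 1 by rewrite mxE V_unit ?SV ?mem_nth.
have G_offdiag m j : m != j -> `|G m j| <= mu by rewrite mxE; apply: gram_offdiag.
have k_mu_ge0 : 0 <= k%:R * mu by rewrite mulr_ge0.
have mu_small : k.-1%:R * mu < 1 by rewrite mulrDl in k_small; lra.
have [c [cG c_le]] := diag_dominant_solve_ones G_diag G_offdiag mu_small.
pose a := \sum_m c 0 m *: S`_m.
have dotv_a x : dotv a x = \sum_m c 0 m * dotv S`_m x.
  by rewrite dotvC dotv_sumr; apply: eq_bigr => m _; rewrite dotvC.
have a_S s : s \in S -> dotv a s = 1.
  move=> sS; rewrite -(nth_index 0 sS) dotv_a.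
  have := congr1 (fun M : 'rV_k => M 0 (Ordinal (etrans (index_mem s S) sS))) cG.
  by rewrite !mxE => <-; apply: eq_bigr => m _; rewrite mxE.
exists a; split=> // w wV wS.
have [Nw_S|Nw_notS] := boolP (- w \in S).
  by rewrite -[w]opprK dotvNr a_S //; lra.
have S_w (m : 'I_k) : `|dotv S`_m w| <= mu.
  case: (V_coherent (SV (mem_nth 0 (ltn_ord m))) wV) => // [w_Sm|w_NSm].
    by rewrite w_Sm mem_nth in wS.
  by rewrite w_NSm opprK mem_nth in Nw_notS.
have D_gt0 : 0 < 1 - k.-1%:R * mu by rewrite subr_gt0.
have a_w : `|dotv a w| <= k%:R * ((1 - k.-1%:R * mu)^-1 * mu).
  rewrite dotv_a; apply: le_trans (ler_norm_sum _ _ _) _.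
  rewrite -[k in k%:R]card_ord mulr_natl -sumr_const; apply: ler_sum => m _.
  by rewrite normrM ler_pM.
apply: le_lt_trans (ler_norm _) (le_lt_trans a_w _).
by rewrite mulrCA mulrC ltr_pdivrMr // mul1r; rewrite mulrDl in k_small; lra.
Qed.

End Gram.

Lemma cs_neighborly_conv k : (k%:R + k.-1%:R) * mu < 1 -> cs_neighborly (conv V) k.
Proof.
move=> k_small S S_uniq S_size S_vert S_noanti; rewrite -S_size in k_small.
have SV : {subset S <= V} by move=> v /S_vert /is_vertex_conv.
have [a [a_S a_lt1]] := exposing_functional SV S_uniq S_noanti k_small.
have a_le1 (i : 'I_(size V)) : dotv a V`_i <= 1.
  have [/a_S -> //|/(a_lt1 _ (mem_nth 0 (ltn_ord i)))] := boolP (V`_i \in S).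
  exact: ltW.
have face_supp := conv_supported_face a_le1.
exists (fun x => conv V x /\ dotv a x = 1); split.
  by exists a, 1; split=> //; apply: conv_dotv_le.
move=> v; split=> [/(supported_vertex_mem face_supp) [vV [_ av]]|vS].
  by apply: contraT => /(a_lt1 _ vV); rewrite av ltxx.
apply: (supported_is_vertex (a := v) face_supp).
  by split; [apply/conv_mem/SV | apply: a_S].
move=> i _ ne; rewrite V_unit ?SV //.
exact: dotv_lt1 (SV _ vS) (mem_nth 0 (ltn_ord i)) ne.
Qed.

End CoherentUnitVectors.

Definition symmetrize (R : realType) d (W : seq 'rV[R]_d) := W ++ map -%R W.

Section Symmetrize.
Variables (R : realType) (d : nat) (W : seq 'rV[R]_d) (mu : R).

Lemma mem_symmetrize u : (u \in symmetrize W) = (u \in W) || (- u \in W).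
Proof.
rewrite mem_cat; congr (_ || _); apply/mapP/idP => [[w wW ->]|NuW].
  by rewrite opprK.
by exists (- u); rewrite ?opprK.
Qed.

Lemma mem_symmetrizeN u : (- u \in symmetrize W) = (u \in symmetrize W).
Proof. by rewrite !mem_symmetrize opprK orbC. Qed.

Lemma symmetrize_oppr_sub : {subset map -%R (symmetrize W) <= symmetrize W}.
Proof. by move=> _ /mapP[u uV ->]; rewrite mem_symmetrizeN. Qed.

Hypotheses (W_unit : forall u, u \in W -> dotv u u = 1)
  (W_coherent : forall u w, u \in W -> w \in W -> w = u \/ `|dotv u w| <= mu)
  (mu_lt1 : mu < 1).

Lemma symmetrize_unit u : u \in symmetrize W -> dotv u u = 1.
Proof.
rewrite mem_symmetrize => /orP[/W_unit //|/W_unit].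
by rewrite dotvNl dotvNr opprK.
Qed.

Lemma symmetrize_coherent u w : u \in symmetrize W -> w \in symmetrize W ->
  [\/ w = u, w = - u | `|dotv u w| <= mu].
Proof.
wlog uW : u w / u \in W => [coh uV wV|_].
  have := uV; rewrite mem_symmetrize => /orP[uW|NuW]; first exact: coh.
  rewrite -mem_symmetrizeN in uV; rewrite -mem_symmetrizeN in wV.
  case: (coh _ _ NuW uV wV) => [/oppr_inj ->|/oppr_inj ->|]; [exact: Or31|exact: Or32|].
  by rewrite dotvNl dotvNr opprK => /Or33.
rewrite mem_symmetrize => /orP[wW|NwW].
  by case: (W_coherent uW wW) => [/Or31|/Or33].
case: (W_coherent uW NwW) => [Nw_u|]; first by apply: Or32; rewrite -Nw_u opprK.
by rewrite dotvNr normrN => /Or33.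
Qed.

Lemma symmetrize_uniq : uniq W -> uniq (symmetrize W).
Proof.
move=> W_uniq; rewrite cat_uniq W_uniq (map_inj_uniq (@oppr_inj _)) W_uniq andbT /=.
apply/hasPn => _ /mapP[w wW ->]; apply/negP => NwW.
case: (W_coherent wW NwW) => [Nw_w|].
  by move: (W_unit wW); rewrite -{1}Nw_w dotvNl W_unit //; lra.
by rewrite dotvNr normrN W_unit // normr1; have := mu_lt1; lra.
Qed.

End Symmetrize.

Lemma truncn_half_neighborly_bound (R : archiRealFieldType) (s : R) : 0 < s ->
  ((Num.truncn (s / 2))%:R + (Num.truncn (s / 2)).-1%:R) * s^-1 < 1.
Proof.
move=> s_gt0; have k_le : (Num.truncn (s / 2))%:R <= s / 2 :> R.
  by rewrite truncn_le divr_ge0 ?ltW.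
rewrite -/(_ / s) ltr_pdivrMr // mul1r.
case: (Num.truncn _) k_le => [|k] /=; first by rewrite add0r.
by rewrite -addn1 natrD => k_le; lra.
Qed.

Lemma sqrtr_nat_gt1 (R : rcfType) n : (1 < n)%N -> 1 < Num.sqrt (n%:R : R).
Proof. by move=> n_gt1; rewrite -{1}sqrtr1 ltr_sqrt ?ltr1n // ltr0n ltnW. Qed.

Section HadamardFrame.
Variables (R : realType) (d : nat) (H : 'M[int]_d).
Hypotheses (d_gt1 : (1 < d)%N) (H_pm1 : forall i j, H i j = 1 \/ H i j = -1)
  (H_orth : H^T *m H = (d%:Z)%:M).

Let s : R := Num.sqrt d%:R.
Let s_gt1 : 1 < s := sqrtr_nat_gt1 R d_gt1.

Definition hadamard_col j : 'rV[R]_d := \row_l ((H l j)%:~R / s).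

Definition hadamard_frame : seq 'rV[R]_d :=
  [seq delta_mx 0 i | i <- enum 'I_d] ++ map hadamard_col (enum 'I_d).

Lemma dotv_hadamard_col j m : dotv (hadamard_col j) (hadamard_col m) = (j == m)%:R.
Proof.
have s_neq0 : s != 0 by rewrite gt_eqF // (lt_trans ltr01 s_gt1).
transitivity (((H^T *m H) j m)%:~R / (s * s)).
  rewrite mxE rmorph_sum mulr_suml; apply: eq_bigr => l _.
  by rewrite !mxE rmorphM; field.
rewrite H_orth mxE -expr2 sqr_sqrtr ?ler0n //.
by case: eqP => _; rewrite ?mulr1n ?mulr0n ?mul0r // divff // pnatr_eq0 -lt0n ltnW.
Qed.

Lemma dotv_delta_hadamard_col i j : `|dotv (delta_mx 0 i) (hadamard_col j)| = s^-1.
Proof.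
have H_norm : `|(H i j)%:~R : R| = 1 by case: (H_pm1 i j) => ->; rewrite ?normrN normr1.
by rewrite dotv_delta mxE normrM H_norm mul1r ger0_norm // invr_ge0 sqrtr_ge0.
Qed.

Lemma hadamard_frame_unit u : u \in hadamard_frame -> dotv u u = 1.
Proof.
by rewrite mem_cat => /orP[] /mapP[i _ ->]; rewrite ?dotv_delta_delta ?dotv_hadamard_col eqxx.
Qed.

Lemma hadamard_frame_coherent u w : u \in hadamard_frame -> w \in hadamard_frame ->
  w = u \/ `|dotv u w| <= s^-1.
Proof.
rewrite !mem_cat => /orP[] /mapP[i _ ->] /orP[] /mapP[j _ ->].
- rewrite dotv_delta_delta; have [->|_] := eqVneq i j; first by left.
  by right; rewrite normr0 invr_ge0 sqrtr_ge0.
- by right; rewrite dotv_delta_hadamard_col.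
- by right; rewrite dotvC dotv_delta_hadamard_col.
- rewrite dotv_hadamard_col; have [->|_] := eqVneq i j; first by left.
  by right; rewrite normr0 invr_ge0 sqrtr_ge0.
Qed.

Lemma hadamard_frame_uniq : uniq hadamard_frame.
Proof.
rewrite cat_uniq (map_inj_uniq (dotv_orthonormal_inj (@dotv_delta_delta R d))).
rewrite (map_inj_uniq (dotv_orthonormal_inj dotv_hadamard_col)) enum_uniq andbT /=.
apply/hasPn => _ /mapP[j _ ->]; apply/mapP => -[i _ col_delta].
have := dotv_delta_hadamard_col i j; rewrite col_delta dotv_delta_delta eqxx normr1.
move/eqP; rewrite eq_sym invr_eq1 => /eqP s1.
by have := s_gt1; rewrite s1 ltxx.
Qed.

Lemma size_hadamard_frame : size hadamard_frame = (2 * d)%N.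
Proof. by rewrite size_cat !size_map -enumT size_enum_ord addnn mul2n. Qed.

End HadamardFrame.

Unset Implicit Arguments.
Theorem theorem1p1 (R : realType) (d : nat) :
  (4 <= d)%N ->
  (exists H : 'M[int]_d, is_hadamard H) ->
  exists V : seq 'rV[R]_d,
    let P := conv V in
    [/\ centrally_symmetric P, full_dimensional P, has_n_vertices P (4 * d)
      & cs_neighborly P (Num.truncn (Num.sqrt (d%:R : R) / 2))].
Proof.
move=> d_ge4 [H [H_pm1 H_orth]]; have d_gt1 : (1 < d)%N by apply: leq_trans d_ge4.
have s_gt1 := sqrtr_nat_gt1 R d_gt1; set s := Num.sqrt _ in s_gt1 *.
have mu_ge0 : 0 <= s^-1 by rewrite invr_ge0 ltW // (lt_trans ltr01).
have mu_lt1 : s^-1 < 1 by rewrite invf_lt1 // (lt_trans ltr01).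
have W_unit := hadamard_frame_unit (R := R) d_gt1 H_orth.
have W_coherent := hadamard_frame_coherent (R := R) d_gt1 H_pm1 H_orth.
pose V := symmetrize (hadamard_frame R H).
have V_unit := symmetrize_unit W_unit.
have V_coherent := symmetrize_coherent W_coherent.
exists V; split.
- exact/conv_cs/symmetrize_oppr_sub.
- apply: conv_full_dimensional; first exact: symmetrize_oppr_sub.
  by move=> i; rewrite /V mem_symmetrize mem_cat map_f ?mem_enum.
- exists V; split.
  + exact: symmetrize_uniq W_unit W_coherent mu_lt1 (hadamard_frame_uniq R d_gt1 H_pm1 H_orth).
  + by rewrite size_cat size_map size_hadamard_frame; lia.
  + exact: (is_vertex_conv V_unit V_coherent mu_lt1).
- exact: cs_neighborly_conv V_unit V_coherent mu_ge0 mu_lt1 _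
    (truncn_half_neighborly_bound (lt_trans ltr01 s_gt1)).
Qed.
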